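(* Let $P\in\mathcal B\setminus\mathcal B_0$, with coordinates normalized so that $P=(0,0)$. For every $0<\alpha\le1$ there exist $U',V'<0$ (close to $0$) and a constant $I_0>0$ depending on the initial data such that, in the region $D_0=\{(u,v):U'\le u\le 0,\ V'\le v\le0,\ r(u,v)>0\}\subset\mathcal T$, $$|\partial_u\phi(u,v)|\le\frac{I_0}{r(u,v)^{3+\alpha}},\qquad|\partial_v\phi(u,v)|\le\frac{I_0}{r(u,v)^{3+\alpha}}.$$
   Context: Consider the Einstein–scalar field system under spherical symmetry in double null coordinates, $g=-\Omega^2(u,v)\,du\,dv+r^2(u,v)(d\theta^2+\sin^2\theta\,d\varphi^2)$, with scalar field $\phi$; the equations are $r\partial_u\partial_v r=-\partial_ur\,\partial_vr-\frac14\Omega^2$, $r^2\partial_u\partial_v\log\Omega=\partial_ur\,\partial_vr+\frac14\Omega^2-r^2\partial_u\phi\,\partial_v\phi$, $r\partial_u\partial_v\phi=-\partial_ur\,\partial_v\phi-\partial_vr\,\partial_u\phi$, $\partial_u(\Omega^{-2}\partial_ur)=-r\Omega^{-2}(\partial_u\phi)^2$, $\partial_v(\Omega^{-2}\partial_vr)=-r\Omega^{-2}(\partial_v\phi)^2$. We consider the maximal development of Christodoulou's spherically symmetric characteristic data in which a trapped surface forms; $\mathcal T=\{\partial_vr<0,\partial_ur<0,r>0\}$ is the trapped region, $\mathcal B$ the singular future boundary (where $r=0$), $\mathcal B_0$ the first singular point on the centre, and $\mathcal B\setminus\mathcal B_0$ a spacelike $C^1$ curve. Known fact (Christodoulou):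 for $P\in\mathcal B\setminus\mathcal B_0$, $-r\partial_ur\to C_1>0$ and $-r\partial_vr\to C_2>0$ at $P$, continuously along $\mathcal B$, so that in a sufficiently small $D_0$ one has $r\partial_ur+C_1=o(1)$, $r\partial_vr+C_2=o(1)$. *)

From Stdlib Require Import Reals.
Open Scope R_scope.

Definition pd_u (f : R -> R -> R) (u v l : R) : Prop :=
  derivable_pt_lim (fun s => f s v) u l.
Definition pd_v (f : R -> R -> R) (u v l : R) : Prop :=
  derivable_pt_lim (fun s => f u s) v l.

Definition open2 (Q : R -> R -> Prop) : Prop :=
  forall u v, Q u v -> exists d, 0 < d /\
    forall u' v', Rabs (u' - u) < d -> Rabs (v' - v) < d -> Q u' v'.

Definition cont_on2 (Q : R -> R -> Prop) (f : R -> R -> R) : Prop :=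
  forall u v, Q u v -> forall eps, 0 < eps -> exists d, 0 < d /\
    forall u' v', Q u' v' -> Rabs (u' - u) < d -> Rabs (v' - v) < d ->
      Rabs (f u' v' - f u v) < eps.

(* The spherically symmetric Einstein--scalar field system in double null
   coordinates, holding classically on the open region Q (the part of the
   development with r > 0, away from the centre).
   ru = d_u r, rv = d_v r, pu = d_u phi, pv = d_v phi,
   lv = d_v log Omega, and ruv, luv, puv are the mixed second derivatives
   d_u d_v r, d_u d_v log Omega, d_u d_v phi. *)
Definition ESF_solution (Q : R -> R -> Prop)
  (r Om phi ru rv pu pv lv ruv luv puv : R -> R -> R) : Prop :=
  open2 Q /\
  cont_on2 Q r /\ cont_on2 Q Om /\ cont_on2 Q phi /\
  cont_on2 Q ru /\ cont_on2 Q rv /\ cont_on2 Q pu /\ cont_on2 Q pv /\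
  forall u v, Q u v ->
    0 < r u v /\ 0 < Om u v /\
    pd_u r u v (ru u v) /\ pd_v r u v (rv u v) /\
    pd_u phi u v (pu u v) /\ pd_v phi u v (pv u v) /\
    pd_v (fun a b => ln (Om a b)) u v (lv u v) /\
    pd_u rv u v (ruv u v) /\ pd_u lv u v (luv u v) /\ pd_u pv u v (puv u v) /\
    r u v * ruv u v = - (ru u v * rv u v) - / 4 * (Om u v) ^ 2 /\
    (r u v) ^ 2 * luv u v =
      ru u v * rv u v + / 4 * (Om u v) ^ 2 - (r u v) ^ 2 * pu u v * pv u v /\
    r u v * puv u v = - (ru u v * pv u v) - rv u v * pu u v /\
    pd_u (fun a b => / (Om a b) ^ 2 * ru a b) u v
         (- (r u v * / (Om u v) ^ 2 * (pu u v) ^ 2)) /\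
    pd_v (fun a b => / (Om a b) ^ 2 * rv a b) u v
         (- (r u v * / (Om u v) ^ 2 * (pv u v) ^ 2)).

(* Near P = (0,0) the singular boundary B is a spacelike C^1 curve
   v = gamma(u) (gamma(0) = 0, gamma' < 0), the development lies to the
   past of it (v < gamma u), and r -> 0 on it. *)
Definition spacelike_boundary_at_origin (Q : R -> R -> Prop) (r : R -> R -> R)
  : Prop :=
  exists (d : R) (gamma dgamma : R -> R), 0 < d /\ gamma 0 = 0 /\
    (forall u, Rabs u < d ->
        derivable_pt_lim gamma u (dgamma u) /\ dgamma u < 0) /\
    (forall u, Rabs u < d -> continuity_pt dgamma u) /\
    (forall u v, Rabs u < d -> Rabs v < d -> (Q u v <-> v < gamma u)) /\
    (forall u, Rabs u < d -> forall eps, 0 < eps -> exists e, 0 < e /\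
        forall u' v', Q u' v' -> Rabs (u' - u) < e -> Rabs (v' - gamma u) < e ->
          r u' v' < eps).

(* Christodoulou's known fact at P = (0,0):
   r d_u r + C1 = o(1), r d_v r + C2 = o(1) as (u,v) -> P within Q. *)
Definition christodoulou_asymptotics (Q : R -> R -> Prop) (r ru rv : R -> R -> R)
  : Prop :=
  exists C1 C2, 0 < C1 /\ 0 < C2 /\
    forall eps, 0 < eps -> exists e, 0 < e /\
      forall u v, Q u v -> Rabs u < e -> Rabs v < e ->
        Rabs (r u v * ru u v + C1) < eps /\ Rabs (r u v * rv u v + C2) < eps.

From Stdlib Require Import Reals Lra Psatz Classical IndefiniteDescription.
From Coquelicot Require Import Coquelicot.
Open Scope R_scope.

(* With [A = r ∂_u φ] and [B = r ∂_v φ] the wave equation reads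
   [∂_v A = - ∂_u r ∂_v φ] and [∂_u B = - ∂_v r ∂_u φ]. Near P, Christodoulou's
   asymptotics [r ∂_u r ≈ -C1] and [r ∂_v r ≈ -C2] make the pair of bounds
   [r^2 |A| < C1 K], [r^2 |B| < C2 K] self-improving: while the bound on B holds,
   the barriers [± A - C1 K / r^2] decrease in v, and symmetrically in u. Hence
   bounds on the past edges of a small rectangle with corner near P propagate to
   the whole rectangle by continuous induction, giving
   [|∂φ| <= C K / r^3 <= C K / r^(3+α)] because [r < 1] there. The derivative
   [∂_v ∂_u φ] needed for [∂_v A] exists by Peano's form of Schwarz's theorem. *)

Lemma Rabs_sub_le_between (a b c : R) :
  Rmin a b <= c <= Rmax a b -> Rabs (c - a) <= Rabs (b - a).
Proof. unfold Rmin, Rmax; destruct (Rle_dec a b); intros; split_Rabs; lra. Qed.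

Lemma MVT_between (f df : R -> R) (a b : R) :
  (forall c, Rmin a b <= c <= Rmax a b -> derivable_pt_lim f c (df c)) ->
  exists c, Rmin a b <= c <= Rmax a b /\ f b - f a = df c * (b - a).
Proof.
  intros Hf; apply MVT_gen.
  - intros c Hc; apply is_derive_Reals, Hf; lra.
  - intros c Hc; apply derivable_continuous_pt; exists (df c); exact (Hf c Hc).
Qed.

Lemma strict_decrease_of_neg_derivative (g dg : R -> R) (a b : R) :
  a < b ->
  (forall c, a <= c <= b -> derivable_pt_lim g c (dg c)) ->
  (forall c, a < c < b -> dg c < 0) ->
  g b < g a.
Proof.
  intros Hab Hg Hneg.
  destruct (MVT_cor2 g dg a b Hab Hg) as [c [Ec Hc]].
  assert (dg c * (b - a) < 0) by (apply Rmult_neg_pos; [apply Hneg|]; lra).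
  lra.
Qed.

Lemma exists_pos_lt4 (a b c d : R) :
  0 < a -> 0 < b -> 0 < c -> 0 < d ->
  exists h, 0 < h /\ h < a /\ h < b /\ h < c /\ h < d.
Proof.
  intros Ha Hb Hc Hd; exists (Rmin (Rmin a b) (Rmin c d) / 2).
  pose proof (Rmin_l a b); pose proof (Rmin_r a b); pose proof (Rmin_l c d); pose proof (Rmin_r c d).
  pose proof (Rmin_l (Rmin a b) (Rmin c d)); pose proof (Rmin_r (Rmin a b) (Rmin c d)).
  pose proof (Rmin_pos _ _ (Rmin_pos _ _ Ha Hb) (Rmin_pos _ _ Hc Hd)).
  lra.
Qed.

Lemma second_difference_mvt (phi pv puv : R -> R -> R) (u v h k : R) :
  (forall s t, Rmin u (u + h) <= s <= Rmax u (u + h) ->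
     Rmin v (v + k) <= t <= Rmax v (v + k) ->
     pd_v phi s t (pv s t) /\ pd_u pv s t (puv s t)) ->
  exists s t, Rmin u (u + h) <= s <= Rmax u (u + h) /\
    Rmin v (v + k) <= t <= Rmax v (v + k) /\
    phi (u + h) (v + k) - phi u (v + k) - (phi (u + h) v - phi u v) =
      puv s t * h * k.
Proof.
  intros H.
  assert (Hu : Rmin u (u + h) <= u <= Rmax u (u + h))
    by (split; [apply Rmin_l | apply Rmax_l]).
  assert (Huh : Rmin u (u + h) <= u + h <= Rmax u (u + h))
    by (split; [apply Rmin_r | apply Rmax_r]).
  destruct (MVT_between (fun t => phi (u + h) t - phi u t)
              (fun t => pv (u + h) t - pv u t) v (v + k)) as [t [Ht Et]].
  { intros c Hc; apply derivable_pt_lim_minus; apply H; assumption. }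
  destruct (MVT_between (fun s => pv s t) (fun s => puv s t) u (u + h))
    as [s [Hs Es]].
  { intros c Hc; apply H; assumption. }
  exists s, t; split; [|split]; [assumption | assumption |].
  cbv beta in Et, Es; rewrite Et, Es; ring.
Qed.

(* [(pu u (v + k) - pu u v) / k] is a limit of second difference quotients of
   [phi], each of which is a value of [puv]. *)
Lemma pu_v_quotient_approx (phi pu pv puv : R -> R -> R) (u v d k : R) :
  (forall s t, Rabs (s - u) < d -> Rabs (t - v) < d ->
     pd_u phi s t (pu s t) /\ pd_v phi s t (pv s t) /\ pd_u pv s t (puv s t)) ->
  k <> 0 -> Rabs k < d ->
  forall eta, 0 < eta -> exists s t, Rabs (s - u) < eta /\ Rabs (t - v) <= Rabs k /\
    Rabs ((pu u (v + k) - pu u v) / k - puv s t) < eta.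
Proof.
  intros Hd Hk0 Hkd eta Heta.
  pose proof (Rabs_pos_lt k Hk0) as Hk.
  assert (Hk' : 0 < eta * Rabs k / 2) by (apply Rdiv_lt_0_compat; [nra | lra]).
  assert (Htop : pd_u phi u (v + k) (pu u (v + k))).
  { apply Hd; [rewrite Rminus_diag, Rabs_R0; lra |].
    replace (v + k - v) with k by ring; exact Hkd. }
  assert (Hbot : pd_u phi u v (pu u v)) by (apply Hd; rewrite Rminus_diag, Rabs_R0; lra).
  destruct (Htop _ Hk') as [h1 Hh1]; destruct (Hbot _ Hk') as [h2 Hh2].
  destruct (exists_pos_lt4 h1 h2 d eta (cond_pos h1) (cond_pos h2) ltac:(lra) Heta)
    as [h [Hh0 [Hhh1 [Hhh2 [Hhd Hheta]]]]].
  assert (Habsh : Rabs h = h) by (apply Rabs_right; lra).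
  destruct (second_difference_mvt phi pv puv u v h k) as [s [t [Hs [Ht E]]]].
  { intros s t Hs Ht.
    apply Rabs_sub_le_between in Hs; apply Rabs_sub_le_between in Ht.
    replace (u + h - u) with h in Hs by ring; replace (v + k - v) with k in Ht by ring.
    apply Hd; lra. }
  apply Rabs_sub_le_between in Hs; apply Rabs_sub_le_between in Ht.
  replace (u + h - u) with h in Hs by ring; replace (v + k - v) with k in Ht by ring.
  exists s, t; split; [lra | split; [exact Ht |]].
  specialize (Hh1 h ltac:(lra) ltac:(lra)); specialize (Hh2 h ltac:(lra) ltac:(lra)).
  set (A1 := (phi (u + h) (v + k) - phi u (v + k)) / h) in Hh1.
  set (A2 := (phi (u + h) v - phi u v) / h) in Hh2.
  assert (Hpuv : puv s t = (A1 - A2) / k)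
    by (unfold A1, A2; field_simplify_eq; [lra | split; lra]).
  rewrite Hpuv.
  replace ((pu u (v + k) - pu u v) / k - (A1 - A2) / k)
    with (((A2 - pu u v) - (A1 - pu u (v + k))) / k) by (field; exact Hk0).
  unfold Rdiv; rewrite Rabs_mult, Rabs_inv.
  apply (Rmult_lt_reg_r (Rabs k)); [exact Hk |].
  rewrite Rmult_assoc, Rinv_l by lra.
  assert (Rabs ((A2 - pu u v) - (A1 - pu u (v + k))) < eta * Rabs k)
    by (eapply Rle_lt_trans; [apply Rabs_triang | rewrite Rabs_Ropp; lra]).
  lra.
Qed.

(* Peano's form of Schwarz's theorem: only one mixed partial is assumed to exist. *)
Lemma mixed_partials_commute (phi pu pv puv : R -> R -> R) (u v : R) :
  locally_2d (fun s t => pd_u phi s t (pu s t) /\ pd_v phi s t (pv s t) /\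
                         pd_u pv s t (puv s t)) u v ->
  continuity_2d_pt puv u v -> pd_v pu u v (puv u v).
Proof.
  intros [d Hd] Hc eps Heps.
  destruct (Hc (mkposreal (eps / 2) ltac:(lra))) as [d1 Hd1]; cbn in Hd1.
  exists (mkposreal _ (Rmin_pos _ _ (cond_pos d) (cond_pos d1))); cbn; intros k Hk0 Hk.
  pose proof (Rmin_l d d1); pose proof (Rmin_r d d1).
  destruct (pu_v_quotient_approx phi pu pv puv u v d k Hd Hk0 ltac:(lra)
              (Rmin (eps / 2) d1) (Rmin_pos (eps / 2) d1 ltac:(lra) (cond_pos d1)))
    as [s [t [Hs [Ht Hq]]]].
  pose proof (Rmin_l (eps / 2) d1); pose proof (Rmin_r (eps / 2) d1).
  assert (Hst : Rabs (puv s t - puv u v) < eps / 2) by (apply Hd1; lra).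
  replace ((pu u (v + k) - pu u v) / k - puv u v)
    with (((pu u (v + k) - pu u v) / k - puv s t) + (puv s t - puv u v)) by ring.
  eapply Rle_lt_trans; [apply Rabs_triang | lra].
Qed.

Lemma open2_locally_2d (Q : R -> R -> Prop) (u v : R) :
  open2 Q -> Q u v -> locally_2d Q u v.
Proof. intros HQ Huv; destruct (HQ u v Huv) as [d [Hd H]]; exists (mkposreal d Hd); exact H. Qed.

Lemma cont_on2_continuity_2d_pt (Q : R -> R -> Prop) (f : R -> R -> R) (u v : R) :
  open2 Q -> cont_on2 Q f -> Q u v -> continuity_2d_pt f u v.
Proof.
  intros HQ Hf Huv eps.
  apply (locally_2d_impl Q); [| exact (open2_locally_2d Q u v HQ Huv)].
  destruct (Hf u v Huv eps (cond_pos eps)) as [d [Hd H]].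
  exists (mkposreal d Hd); intros s t Hs Ht HQst; exact (H s t HQst Hs Ht).
Qed.

Lemma continuity_2d_pt_section_u (f : R -> R -> R) (u v : R) :
  continuity_2d_pt f u v -> continuity_pt (fun s => f s v) u.
Proof. intros H; apply continuity_pt_locally; intro eps; exact (locally_2d_1d_const_y _ _ _ (H eps)). Qed.

Lemma continuity_2d_pt_section_v (f : R -> R -> R) (u v : R) :
  continuity_2d_pt f u v -> continuity_pt (fun t => f u t) v.
Proof. intros H; apply continuity_pt_locally; intro eps; exact (locally_2d_1d_const_x _ _ _ (H eps)). Qed.

Lemma continuity_2d_pt_lt (f : R -> R -> R) (u v c : R) :
  continuity_2d_pt f u v -> f u v < c -> locally_2d (fun s t => f s t < c) u v.
Proof.
  intros Hf Hc.
  apply (locally_2d_impl (fun s t => Rabs (f s t - f u v) < c - f u v)).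
  - apply locally_2d_forall; intros s t Hst; apply Rabs_def2 in Hst; lra.
  - exact (Hf (mkposreal (c - f u v) ltac:(lra))).
Qed.

Lemma ValAdh_approx (xs : nat -> R) (l : R) :
  ValAdh xs l -> forall eps, 0 < eps ->
  exists n, Rabs (xs n - l) < eps /\ / (INR n + 1) < eps.
Proof.
  intros H eps Heps.
  destruct (archimed_cor1 eps Heps) as [N [HN HN0]].
  destruct (H (disc l (mkposreal eps Heps)) N) as [n [Hn Hv]].
  { exists (mkposreal eps Heps); intros y Hy; exact Hy. }
  exists n; split; [exact Hv |].
  apply le_INR in Hn; assert (0 < INR N) by (apply lt_0_INR; assumption).
  apply (Rle_lt_trans _ (/ INR N)); [apply Rinv_le_contravar |]; lra.
Qed.

Lemma closed_interval_approx (a b l : R) :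
  (forall eps, 0 < eps -> exists z, a <= z <= b /\ Rabs (z - l) < eps) ->
  a <= l <= b.
Proof.
  intros H; split; apply Rnot_lt_le; intro Hl.
  - destruct (H (a - l)) as [z [Hz Hzl]]; [lra |]; apply Rabs_def2 in Hzl; lra.
  - destruct (H (l - b)) as [z [Hz Hzl]]; [lra |]; apply Rabs_def2 in Hzl; lra.
Qed.

(* Continuous induction in the time function [x + y]. *)
Lemma rectangle_induction (P : R -> R -> Prop) (a b c d : R) :
  (forall x y, a <= x <= b -> c <= y <= d -> P x y ->
     locally_2d (fun x' y' => a <= x' <= b -> c <= y' <= d -> P x' y') x y) ->
  (forall x y, a <= x <= b -> c <= y <= d ->
     (forall x' y', a <= x' <= b -> c <= y' <= d -> x' + y' < x + y -> P x' y') ->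
     P x y) ->
  forall x y, a <= x <= b -> c <= y <= d -> P x y.
Proof.
  intros Hopen Hstep x0 y0 Hx0 Hy0.
  apply NNPP; intro Hbad0.
  set (bad := fun x y => (a <= x <= b /\ c <= y <= d) /\ ~ P x y).
  set (S := fun z => exists x y, bad x y /\ z = - (x + y)).
  destruct (completeness S) as [m [Hub Hlub]].
  { exists (- (a + c)); intros z [x [y [[[Hx Hy] _] ->]]]; lra. }
  { exists (- (x0 + y0)), x0, y0; split; [split; [split |] | reflexivity]; assumption. }
  set (T := - m).
  assert (Hbelow : forall x y, a <= x <= b -> c <= y <= d -> x + y < T -> P x y).
  { intros x y Hx Hy Hs; apply NNPP; intro HP.
    assert (- (x + y) <= m) by (apply Hub; exists x, y; split; [split; [split |] | reflexivity]; assumption).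
    unfold T in Hs; lra. }
  assert (Happrox : forall n : nat, exists p : R * R,
             bad (fst p) (snd p) /\ fst p + snd p < T + / (INR n + 1)).
  { intro n; apply NNPP; intro Hn.
    assert (0 < / (INR n + 1)) by (apply Rinv_0_lt_compat; pose proof (pos_INR n); lra).
    assert (m <= m - / (INR n + 1)); [| lra].
    apply Hlub; intros z [x [y [Hb ->]]]; apply Rnot_lt_le; intro Hz.
    apply Hn; exists (x, y); split; [exact Hb | cbn; unfold T; lra]. }
  set (pt := fun n => proj1_sig (constructive_indefinite_description _ (Happrox n))).
  assert (Hpt : forall n, bad (fst (pt n)) (snd (pt n)) /\
                  T <= fst (pt n) + snd (pt n) < T + / (INR n + 1)).
  { intro n; unfold pt.
    destruct (constructive_indefinite_description _ (Happrox n)) as [p [[[Hx Hy] HP] Hs]].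
    split; [split; [split |]; assumption | split; [| assumption]].
    apply Rnot_lt_le; intro Hlt; exact (HP (Hbelow _ _ Hx Hy Hlt)). }
  destruct (Bolzano_Weierstrass (fun n => fst (pt n)) (fun s => a <= s <= b)
              (compact_P3 a b)) as [l Hl].
  { intro n; apply Hpt. }
  assert (Hnear : forall eps, 0 < eps -> exists n,
             Rabs (fst (pt n) - l) < eps /\ Rabs (snd (pt n) - (T - l)) < eps).
  { intros eps Heps; destruct (ValAdh_approx _ _ Hl (eps / 2)) as [n [Hn Hn']]; [lra |].
    exists n; split; [lra |].
    destruct (Hpt n) as [_ Hs]; apply Rabs_def2 in Hn; apply Rabs_def1; lra. }
  assert (Hl_ab : a <= l <= b).
  { apply closed_interval_approx; intros eps Heps; destruct (Hnear eps Heps) as [n [Hn _]].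
    exists (fst (pt n)); split; [apply Hpt | exact Hn]. }
  assert (Hl_cd : c <= T - l <= d).
  { apply closed_interval_approx; intros eps Heps; destruct (Hnear eps Heps) as [n [_ Hn]].
    exists (snd (pt n)); split; [apply Hpt | exact Hn]. }
  assert (HP : P l (T - l)).
  { apply Hstep; [assumption | assumption |].
    intros x y Hx Hy Hs; apply Hbelow; [assumption | assumption | lra]. }
  destruct (Hopen l (T - l) Hl_ab Hl_cd HP) as [eps Heps].
  destruct (Hnear eps (cond_pos eps)) as [n [Hx Hy]].
  destruct (Hpt n) as [[[Hxab Hycd] HPn] _].
  exact (HPn (Heps _ _ Hx Hy Hxab Hycd)).
Qed.

Lemma derivable_pt_lim_Kdiv_sqr (rho : R -> R) (kappa x drho : R) :
  rho x <> 0 -> derivable_pt_lim rho x drho ->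
  derivable_pt_lim (fun s => kappa / rho s ^ 2) x (- (2 * kappa * drho / rho x ^ 3)).
Proof.
  intros Hr Hrho.
  assert (Hsq : derivable_pt_lim (fun s => rho s ^ 2) x (INR 2 * rho x ^ 1 * drho)).
  { apply (derivable_pt_lim_comp rho (fun y => y ^ 2)); [exact Hrho | apply derivable_pt_lim_pow]. }
  assert (Hdiv := derivable_pt_lim_div (fct_cte kappa) (fun s => rho s ^ 2) x 0 _
                    (derivable_pt_lim_const kappa x) Hsq (pow_nonzero _ 2 Hr)).
  replace (- (2 * kappa * drho / rho x ^ 3)) with
    ((0 * rho x ^ 2 - INR 2 * rho x ^ 1 * drho * fct_cte kappa x) / (rho x ^ 2)²)
    by (unfold fct_cte, Rsqr; cbn; field; exact Hr).
  exact Hdiv.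
Qed.

(* The barriers [± f - kappa / rho ^ 2] decrease, and they start negative. *)
Lemma weighted_bound_transport (f rho df drho : R -> R) (kappa a b : R) :
  a <= b ->
  (forall c, a <= c <= b ->
     0 < rho c /\ derivable_pt_lim f c (df c) /\ derivable_pt_lim rho c (drho c)) ->
  (forall c, a < c < b -> rho c ^ 3 * Rabs (df c) < - (2 * kappa * drho c)) ->
  rho a ^ 2 * Rabs (f a) < kappa ->
  rho b ^ 2 * Rabs (f b) < kappa.
Proof.
  intros Hab Hd Hslope Ha.
  destruct (Rle_lt_or_eq_dec a b Hab) as [Hlt | <-]; [| exact Ha].
  assert (Hra : 0 < rho a) by (apply Hd; lra).
  assert (Hrb : 0 < rho b) by (apply Hd; lra).
  assert (Hbarrier : forall sigma, Rabs sigma = 1 ->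
            sigma * f b - kappa / rho b ^ 2 < sigma * f a - kappa / rho a ^ 2).
  { intros sigma Hsigma.
    apply (strict_decrease_of_neg_derivative
             (fun s => sigma * f s - kappa / rho s ^ 2)
             (fun s => sigma * df s - - (2 * kappa * drho s / rho s ^ 3)) a b Hlt).
    - intros c Hc; destruct (Hd c Hc) as [Hr [Hf Hrho]].
      apply (derivable_pt_lim_minus (fun s => sigma * f s)).
      + apply (derivable_pt_lim_scal f sigma c (df c) Hf).
      + apply derivable_pt_lim_Kdiv_sqr; [lra | exact Hrho].
    - intros c Hc; destruct (Hd c ltac:(lra)) as [Hr _].
      specialize (Hslope c Hc).
      assert (Hr3 : 0 < rho c ^ 3) by (apply pow_lt; lra).
      assert (Hsdf : sigma * df c <= Rabs (df c))
        by (rewrite <- (Rmult_1_l (Rabs (df c))), <- Hsigma, <- Rabs_mult; apply Rle_abs).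
      apply (Rmult_lt_reg_r (rho c ^ 3)); [exact Hr3 |].
      replace ((sigma * df c - - (2 * kappa * drho c / rho c ^ 3)) * rho c ^ 3)
        with (sigma * df c * rho c ^ 3 + 2 * kappa * drho c) by (field; lra).
      nra. }
  assert (Hfa : Rabs (f a) < kappa / rho a ^ 2).
  { apply (Rmult_lt_reg_l (rho a ^ 2)); [apply pow_lt; lra |].
    replace (rho a ^ 2 * (kappa / rho a ^ 2)) with kappa by (field; lra); exact Ha. }
  assert (Hfb : Rabs (f b) < kappa / rho b ^ 2).
  { apply Rabs_def2 in Hfa; apply Rabs_def1.
    - specialize (Hbarrier 1 Rabs_R1); lra.
    - assert (Habs : Rabs (-1) = 1) by (rewrite Rabs_left; lra).
      specialize (Hbarrier (-1) Habs); lra. }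
  apply (Rmult_lt_compat_l (rho b ^ 2)) in Hfb; [| apply pow_lt; lra].
  replace (rho b ^ 2 * (kappa / rho b ^ 2)) with kappa in Hfb by (field; lra).
  exact Hfb.
Qed.

Lemma weighted_drift_lt (rho p q w C1 C2 K e : R) :
  0 < rho -> 0 < C1 -> 0 < C2 -> 0 < K -> e <= C1 / 4 -> e <= C2 / 4 ->
  Rabs (rho * p + C1) < e -> Rabs (rho * q + C2) < e ->
  rho ^ 2 * Rabs (rho * w) < C2 * K ->
  rho ^ 3 * Rabs (p * w) < - (2 * (C1 * K) * q).
Proof.
  intros Hr HC1 HC2 HK He1 He2 Hp Hq Hw.
  assert (Hpb : Rabs (rho * p) < C1 + e)
    by (apply Rabs_def2 in Hp; apply Rabs_def1; lra).
  apply Rabs_def2 in Hq.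
  rewrite Rabs_mult, (Rabs_right rho) in Hpb, Hw by lra.
  assert (Hprod : rho * Rabs p * (rho ^ 2 * (rho * Rabs w)) <= (C1 + e) * (C2 * K)).
  { pose proof (Rabs_pos p); pose proof (Rabs_pos w); pose proof (pow_lt rho 2 Hr).
    apply Rmult_le_compat; try lra; repeat apply Rmult_le_pos; lra. }
  apply (Rmult_lt_reg_l rho); [exact Hr |].
  rewrite Rabs_mult.
  replace (rho * (rho ^ 3 * (Rabs p * Rabs w)))
    with (rho * Rabs p * (rho ^ 2 * (rho * Rabs w))) by ring.
  replace (rho * - (2 * (C1 * K) * q)) with (- (2 * (C1 * K)) * (rho * q)) by ring.
  assert (HC1K : 0 < C1 * K) by (apply Rmult_lt_0_compat; lra).
  assert (HC2K : 0 < C2 * K) by (apply Rmult_lt_0_compat; lra).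
  assert (e * (C2 * K) <= C1 / 4 * (C2 * K)) by (apply Rmult_le_compat_r; lra).
  assert (e * (C1 * K) <= C2 / 4 * (C1 * K)) by (apply Rmult_le_compat_r; lra).
  assert (- (2 * (C1 * K)) * (rho * q) > 2 * (C1 * K) * (C2 - e))
    by (destruct Hq as [Hq _]; nra).
  nra.
Qed.

Lemma spacelike_boundary_past_closed (Q : R -> R -> Prop) (r : R -> R -> R) :
  spacelike_boundary_at_origin Q r ->
  exists d, 0 < d /\
    (forall U, - d < U < 0 -> Q 0 U /\ Q U 0) /\
    (forall u v x y, - d < x <= u -> u < d -> - d < y <= v -> v < d -> Q u v -> Q x y).
Proof.
  intros [d [gamma [dgamma [Hd [Hg0 [Hgd [_ [HQg _]]]]]]]].
  assert (Hdec : forall x y, - d < x -> x < y -> y < d -> gamma y < gamma x).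
  { intros x y Hx Hxy Hy.
    apply (strict_decrease_of_neg_derivative gamma dgamma x y Hxy);
      intros c Hc; apply Hgd; apply Rabs_def1; lra. }
  assert (Hin : forall x y, - d < x < d -> - d < y < d -> (Q x y <-> y < gamma x))
    by (intros x y Hx Hy; apply HQg; apply Rabs_def1; lra).
  exists d; split; [exact Hd | split].
  - intros U HU; split; apply Hin; try lra.
    pose proof (Hdec U 0 ltac:(lra) ltac:(lra) ltac:(lra)); lra.
  - intros u v x y Hx Hu Hy Hv Huv.
    apply Hin in Huv; [| lra | lra]; apply Hin; [lra | lra |].
    destruct (Rle_lt_or_eq_dec x u (proj2 Hx)) as [Hxu | ->]; [| lra].
    pose proof (Hdec x u ltac:(lra) Hxu Hu); lra.
Qed.

Lemma spacelike_boundary_r_small (Q : R -> R -> Prop) (r : R -> R -> R) :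
  spacelike_boundary_at_origin Q r ->
  forall eps, 0 < eps -> exists e, 0 < e /\
    forall u v, Q u v -> Rabs u < e -> Rabs v < e -> r u v < eps.
Proof.
  intros [d [gamma [dgamma [Hd [Hg0 [_ [_ [_ Hr0]]]]]]]] eps Heps.
  destruct (Hr0 0 ltac:(rewrite Rabs_R0; exact Hd) eps Heps) as [e [He H]].
  exists e; split; [exact He |]; intros u v Huv Hu Hv.
  apply H; [exact Huv | rewrite Rminus_0_r; exact Hu | rewrite Hg0, Rminus_0_r; exact Hv].
Qed.

Lemma spacelike_boundary_past_rectangles (Q : R -> R -> Prop) (r : R -> R -> R)
    (S : R -> R -> Prop) :
  spacelike_boundary_at_origin Q r ->
  (exists e, 0 < e /\ forall u v, Q u v -> Rabs u < e -> Rabs v < e -> S u v) ->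
  exists U, U < 0 /\
    (forall x, U <= x <= 0 -> Q x U /\ Q U x) /\
    (forall u v, U <= u <= 0 -> U <= v <= 0 -> Q u v ->
       r u v < 1 /\ forall x y, U <= x <= u -> U <= y <= v -> Q x y /\ S x y).
Proof.
  intros HB [e [He HS]].
  destruct (spacelike_boundary_past_closed Q r HB) as [d [Hd [Hcorner Hpast]]].
  destruct (spacelike_boundary_r_small Q r HB 1 Rlt_0_1) as [e' [He' Hr1]].
  set (U := - Rmin d (Rmin e e') / 2).
  assert (HU : - d < U < 0 /\ - e < U /\ - e' < U).
  { pose proof (Rmin_l d (Rmin e e')); pose proof (Rmin_r d (Rmin e e')).
    pose proof (Rmin_l e e'); pose proof (Rmin_r e e').
    pose proof (Rmin_pos _ _ Hd (Rmin_pos _ _ He He')); unfold U; lra. }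
  destruct (Hcorner U (proj1 HU)) as [HQ0U HQU0].
  exists U; split; [lra | split].
  - intros x Hx; split; [apply (Hpast 0 U) | apply (Hpast U 0)]; lra || assumption.
  - intros u v Hu Hv Huv; split.
    + apply Hr1; [exact Huv | |]; apply Rabs_def1; lra.
    + intros x y Hx Hy.
      assert (Hxy : Q x y) by (apply (Hpast u v); lra || assumption).
      split; [exact Hxy |]; apply HS; [exact Hxy | |]; apply Rabs_def1; lra.
Qed.

Section EinsteinScalarField.

Variables (Q : R -> R -> Prop) (r Om phi ru rv pu pv lv ruv luv puv : R -> R -> R).
Hypothesis Hsol : ESF_solution Q r Om phi ru rv pu pv lv ruv luv puv.

Lemma ESF_open : open2 Q.
Proof. apply Hsol. Qed.

Lemma ESF_continuity_2d_pt (f : R -> R -> R) (u v : R) :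
  cont_on2 Q f -> Q u v -> continuity_2d_pt f u v.
Proof. intros Hf Huv; exact (cont_on2_continuity_2d_pt Q f u v ESF_open Hf Huv). Qed.

Lemma puv_continuous (u v : R) : Q u v -> continuity_2d_pt puv u v.
Proof.
  destruct Hsol as [HQ [Cr [_ [_ [Cru [Crv [Cpu [Cpv Hpt]]]]]]]]; intros Huv.
  apply (continuity_2d_pt_ext_loc
           (fun s t => (- (ru s t * pv s t) - rv s t * pu s t) * / r s t)).
  - apply (locally_2d_impl Q); [| exact (open2_locally_2d Q u v HQ Huv)].
    apply locally_2d_forall; intros s t Hst.
    destruct (Hpt s t Hst) as [Hr [_ [_ [_ [_ [_ [_ [_ [_ [_ [_ [_ [Hwave _]]]]]]]]]]]]].
    rewrite <- Hwave; field; lra.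
  - apply continuity_2d_pt_mult.
    + apply continuity_2d_pt_minus; [apply continuity_2d_pt_opp |];
        apply continuity_2d_pt_mult; apply ESF_continuity_2d_pt; assumption.
    + apply continuity_2d_pt_inv; [apply ESF_continuity_2d_pt; assumption |].
      apply Rgt_not_eq, (Hpt u v Huv).
Qed.

Lemma pd_v_pu (u v : R) : Q u v -> pd_v pu u v (puv u v).
Proof.
  intros Huv; apply (mixed_partials_commute phi pu pv puv u v); [| exact (puv_continuous u v Huv)].
  apply (locally_2d_impl Q); [| exact (open2_locally_2d Q u v ESF_open Huv)].
  apply locally_2d_forall; intros s t Hst.
  destruct Hsol as [_ [_ [_ [_ [_ [_ [_ [_ Hpt]]]]]]]].
  destruct (Hpt s t Hst) as [_ [_ [_ [_ [Hpu [Hpv [_ [_ [_ [Hpuv _]]]]]]]]]].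
  auto.
Qed.

Lemma pd_v_r_pu (u v : R) :
  Q u v -> derivable_pt_lim (fun t => r u t * pu u t) v (- (ru u v * pv u v)).
Proof.
  intros Huv; destruct Hsol as [_ [_ [_ [_ [_ [_ [_ [_ Hpt]]]]]]]].
  destruct (Hpt u v Huv) as [_ [_ [_ [Hrv [_ [_ [_ [_ [_ [_ [_ [_ [Hwave _]]]]]]]]]]]]].
  replace (- (ru u v * pv u v)) with (rv u v * pu u v + r u v * puv u v) by lra.
  apply (derivable_pt_lim_mult (fun t => r u t) (fun t => pu u t));
    [exact Hrv | exact (pd_v_pu u v Huv)].
Qed.

Lemma pd_u_r_pv (u v : R) :
  Q u v -> derivable_pt_lim (fun s => r s v * pv s v) u (- (rv u v * pu u v)).
Proof.
  intros Huv; destruct Hsol as [_ [_ [_ [_ [_ [_ [_ [_ Hpt]]]]]]]].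
  destruct (Hpt u v Huv) as [_ [_ [Hru [_ [_ [_ [_ [_ [_ [Hpuv [_ [_ [Hwave _]]]]]]]]]]]]].
  replace (- (rv u v * pu u v)) with (ru u v * pv u v + r u v * puv u v) by lra.
  apply (derivable_pt_lim_mult (fun s => r s v) (fun s => pv s v)); [exact Hru | exact Hpuv].
Qed.

Lemma weighted_continuous (f : R -> R -> R) (u v : R) :
  cont_on2 Q f -> Q u v ->
  continuity_2d_pt (fun s t => r s t ^ 2 * Rabs (r s t * f s t)) u v.
Proof.
  destruct Hsol as [_ [Cr _]]; intros Hf Huv.
  assert (Hrc := ESF_continuity_2d_pt r u v Cr Huv).
  apply continuity_2d_pt_mult.
  - apply (continuity_1d_2d_pt_comp (fun z => z ^ 2)); [| exact Hrc].
    apply derivable_continuous_pt, derivable_pt_pow.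
  - apply (continuity_1d_2d_pt_comp Rabs); [apply Rcontinuity_abs |].
    apply continuity_2d_pt_mult; [exact Hrc | exact (ESF_continuity_2d_pt f u v Hf Huv)].
Qed.

Lemma weighted_bounded_u (f : R -> R -> R) (y a b : R) :
  a <= b -> cont_on2 Q f -> (forall x, a <= x <= b -> Q x y) ->
  exists M, forall x, a <= x <= b -> r x y ^ 2 * Rabs (r x y * f x y) <= M.
Proof.
  intros Hab Hf HQ.
  destruct (continuity_ab_maj (fun x => r x y ^ 2 * Rabs (r x y * f x y)) a b Hab)
    as [xm [Hxm _]]; [| eexists; exact Hxm].
  intros c Hc.
  apply (continuity_2d_pt_section_u (fun s t => r s t ^ 2 * Rabs (r s t * f s t))).
  exact (weighted_continuous f c y Hf (HQ c Hc)).
Qed.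

Lemma weighted_bounded_v (f : R -> R -> R) (x a b : R) :
  a <= b -> cont_on2 Q f -> (forall y, a <= y <= b -> Q x y) ->
  exists M, forall y, a <= y <= b -> r x y ^ 2 * Rabs (r x y * f x y) <= M.
Proof.
  intros Hab Hf HQ.
  destruct (continuity_ab_maj (fun y => r x y ^ 2 * Rabs (r x y * f x y)) a b Hab)
    as [ym [Hym _]]; [| eexists; exact Hym].
  intros c Hc.
  apply (continuity_2d_pt_section_v (fun s t => r s t ^ 2 * Rabs (r s t * f s t))).
  exact (weighted_continuous f x c Hf (HQ c Hc)).
Qed.

Lemma weighted_bounds_rectangle (U V u0 v0 C1 C2 K e : R) :
  0 < C1 -> 0 < C2 -> 0 < K -> e <= C1 / 4 -> e <= C2 / 4 ->
  (forall x y, U <= x <= u0 -> V <= y <= v0 ->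
     Q x y /\ Rabs (r x y * ru x y + C1) < e /\ Rabs (r x y * rv x y + C2) < e) ->
  (forall x, U <= x <= u0 -> r x V ^ 2 * Rabs (r x V * pu x V) < C1 * K) ->
  (forall y, V <= y <= v0 -> r U y ^ 2 * Rabs (r U y * pv U y) < C2 * K) ->
  forall x y, U <= x <= u0 -> V <= y <= v0 ->
    r x y ^ 2 * Rabs (r x y * pu x y) < C1 * K /\
    r x y ^ 2 * Rabs (r x y * pv x y) < C2 * K.
Proof.
  intros HC1 HC2 HK He1 He2 Hrect HedgeV HedgeU.
  destruct Hsol as [_ [_ [_ [_ [_ [_ [Cpu [Cpv Hpt]]]]]]]].
  apply rectangle_induction.
  - intros x y Hx Hy HP; destruct (Hrect x y Hx Hy) as [Hxy _].
    apply (locally_2d_impl (fun s t => r s t ^ 2 * Rabs (r s t * pu s t) < C1 * K /\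
                                       r s t ^ 2 * Rabs (r s t * pv s t) < C2 * K)).
    + apply locally_2d_forall; tauto.
    + apply locally_2d_and; apply continuity_2d_pt_lt; try apply HP;
        apply weighted_continuous; assumption.
  - intros x y Hx Hy Hbelow; split.
    + apply (weighted_bound_transport (fun t => r x t * pu x t) (fun t => r x t)
               (fun t => - (ru x t * pv x t)) (fun t => rv x t) (C1 * K) V y);
        [lra | | | apply HedgeV; exact Hx].
      * intros c Hc; destruct (Hrect x c Hx ltac:(lra)) as [Hxc _].
        split; [apply (Hpt x c Hxc) | split; [exact (pd_v_r_pu x c Hxc) | apply (Hpt x c Hxc)]].
      * intros c Hc; destruct (Hrect x c Hx ltac:(lra)) as [Hxc [Hm Hn]].
        rewrite Rabs_Ropp.
        apply (weighted_drift_lt (r x c) (ru x c) (rv x c) (pv x c) C1 C2 K e);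
          try assumption; [apply (Hpt x c Hxc) |].
        apply (Hbelow x c); lra.
    + apply (weighted_bound_transport (fun s => r s y * pv s y) (fun s => r s y)
               (fun s => - (rv s y * pu s y)) (fun s => ru s y) (C2 * K) U x);
        [lra | | | apply HedgeU; exact Hy].
      * intros c Hc; destruct (Hrect c y ltac:(lra) Hy) as [Hcy _].
        split; [apply (Hpt c y Hcy) | split; [exact (pd_u_r_pv c y Hcy) | apply (Hpt c y Hcy)]].
      * intros c Hc; destruct (Hrect c y ltac:(lra) Hy) as [Hcy [Hm Hn]].
        rewrite Rabs_Ropp.
        apply (weighted_drift_lt (r c y) (rv c y) (ru c y) (pu c y) C2 C1 K e);
          try assumption; [apply (Hpt c y Hcy) |].
        apply (Hbelow c y); lra.
Qed.

End EinsteinScalarField.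

Lemma exists_weight (C1 C2 M1 M2 : R) :
  0 < C1 -> 0 < C2 -> exists K, 0 < K /\ M1 < C1 * K /\ M2 < C2 * K.
Proof.
  intros HC1 HC2; exists (Rabs M1 / C1 + Rabs M2 / C2 + 1).
  pose proof (Rle_abs M1); pose proof (Rle_abs M2).
  assert (0 <= Rabs M1 / C1) by (apply Rdiv_le_0_compat; [apply Rabs_pos | lra]).
  assert (0 <= Rabs M2 / C2) by (apply Rdiv_le_0_compat; [apply Rabs_pos | lra]).
  split; [lra | split].
  - replace (C1 * (Rabs M1 / C1 + Rabs M2 / C2 + 1))
      with (Rabs M1 + C1 * (Rabs M2 / C2 + 1)) by (field; lra).
    assert (0 < C1 * (Rabs M2 / C2 + 1)) by (apply Rmult_lt_0_compat; lra); lra.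
  - replace (C2 * (Rabs M1 / C1 + Rabs M2 / C2 + 1))
      with (Rabs M2 + C2 * (Rabs M1 / C1 + 1)) by (field; lra).
    assert (0 < C2 * (Rabs M1 / C1 + 1)) by (apply Rmult_lt_0_compat; lra); lra.
Qed.

Lemma Rpower_le_pow (x a : R) (n : nat) :
  0 < x <= 1 -> INR n <= a -> Rpower x a <= x ^ n.
Proof.
  intros Hx Hn.
  replace a with (INR n + (a - INR n)) by ring.
  rewrite Rpower_plus, Rpower_pow by lra.
  assert (Hle : Rpower x (a - INR n) <= 1).
  { replace 1 with (Rpower 1 (a - INR n))
      by (unfold Rpower; rewrite ln_1, Rmult_0_r; apply exp_0).
    apply Rle_Rpower_l; lra. }
  assert (0 < x ^ n) by (apply pow_lt; lra).
  nra.
Qed.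

Lemma Rabs_le_div_Rpower (rho p I alpha : R) :
  0 < rho < 1 -> 0 < alpha -> rho ^ 2 * Rabs (rho * p) <= I ->
  Rabs p <= I / Rpower rho (3 + alpha).
Proof.
  intros Hr Ha HI.
  assert (Hpow : Rpower rho (3 + alpha) <= rho ^ 3) by (apply Rpower_le_pow; cbn; lra).
  assert (Hpos : 0 < Rpower rho (3 + alpha)) by apply exp_pos.
  rewrite Rabs_mult, (Rabs_right rho) in HI by lra.
  apply (Rmult_le_reg_r (Rpower rho (3 + alpha))); [exact Hpos |].
  replace (I / Rpower rho (3 + alpha) * Rpower rho (3 + alpha)) with I by (field; lra).
  pose proof (Rabs_pos p).
  replace (rho ^ 2 * (rho * Rabs p)) with (Rabs p * rho ^ 3) in HI by ring.
  apply (Rle_trans _ (Rabs p * rho ^ 3)); [apply Rmult_le_compat_l |]; lra.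
Qed.

Theorem proposition4p2
  (Q : R -> R -> Prop)
  (r Om phi ru rv pu pv lv ruv luv puv : R -> R -> R)
  (Hsol : ESF_solution Q r Om phi ru rv pu pv lv ruv luv puv)
  (HB : spacelike_boundary_at_origin Q r)
  (HC : christodoulou_asymptotics Q r ru rv) :
  forall alpha, 0 < alpha <= 1 ->
  exists U' V' I0, U' < 0 /\ V' < 0 /\ 0 < I0 /\
    forall u v, U' <= u <= 0 -> V' <= v <= 0 -> Q u v ->
      (ru u v < 0 /\ rv u v < 0 /\ 0 < r u v) /\
      Rabs (pu u v) <= I0 / Rpower (r u v) (3 + alpha) /\
      Rabs (pv u v) <= I0 / Rpower (r u v) (3 + alpha).
Proof.
  intros alpha [Halpha _].
  destruct HC as [C1 [C2 [HC1 [HC2 Hasym]]]].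
  set (e := Rmin C1 C2 / 4).
  assert (He : 0 < e /\ e <= C1 / 4 /\ e <= C2 / 4)
    by (pose proof (Rmin_l C1 C2); pose proof (Rmin_r C1 C2);
        pose proof (Rmin_pos C1 C2 HC1 HC2); unfold e; lra).
  destruct (spacelike_boundary_past_rectangles Q r _ HB (Hasym e (proj1 He)))
    as [U [HU [Hedges Hrects]]].
  destruct (weighted_bounded_u Q r Om phi ru rv pu pv lv ruv luv puv Hsol pu U U 0)
    as [M1 HM1]; [lra | apply Hsol | apply Hedges |].
  destruct (weighted_bounded_v Q r Om phi ru rv pu pv lv ruv luv puv Hsol pv U U 0)
    as [M2 HM2]; [lra | apply Hsol | apply Hedges |].
  destruct (exists_weight C1 C2 M1 M2 HC1 HC2) as [K [HK [HK1 HK2]]].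
  exists U, U, ((C1 + C2) * K).
  split; [exact HU | split; [exact HU | split; [apply Rmult_lt_0_compat; lra |]]].
  intros u v Hu Hv Huv.
  destruct (Hrects u v Hu Hv Huv) as [Hr1 Hrect].
  destruct (weighted_bounds_rectangle Q r Om phi ru rv pu pv lv ruv luv puv Hsol
              U U u v C1 C2 K e HC1 HC2 HK (proj1 (proj2 He)) (proj2 (proj2 He)) Hrect)
    with (x := u) (y := v) as [Hpu Hpv]; try lra.
  { intros x Hx; apply (Rle_lt_trans _ M1); [apply HM1 |]; lra. }
  { intros y Hy; apply (Rle_lt_trans _ M2); [apply HM2 |]; lra. }
  destruct (Hrect u v ltac:(lra) ltac:(lra)) as [_ [Hru Hrv]].
  assert (Hr : 0 < r u v < 1) by (split; [apply Hsol, Huv | exact Hr1]).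
  apply Rabs_def2 in Hru; apply Rabs_def2 in Hrv.
  split; [split; [| split]; [nra | nra | lra] | split];
    apply (Rabs_le_div_Rpower _ _ _ alpha Hr Halpha); nra.
Qed.
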